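(* Let $G$ be a compact matrix Lie group of $n\times n$ unitary matrices with normalized Haar measure $\eta$, let $\epsilon>0$, and let $X=\{x_1,\dots,x_N\}\subset\mathbb{C}^n$ satisfy $x_i\neq x_j$ for $i\neq j$ and $Ax_i\neq x_i$ for all $i$ and all $A\in G$ with $A\neq I$. Let $t$ be a positive integer and let $S^t_{ij}$ be as in the context. Suppose $x_j=Q\cdot x_i$ for some $Q\in G$. Then for all $k,r\in[N]$ and $R\in G$, $$\int_G S^t_{ik}(I,C)\,S^t_{ir}(I,CR)\,d\eta(C)=\int_G S^t_{jk}(I,C)\,S^t_{jr}(I,CR)\,d\eta(C),$$ i.e. $S^t_{i,\cdot}(I,\cdot)\circledast S^t_{i,\cdot}(I,\cdot)=S^t_{j,\cdot}(I,\cdot)\circledast S^t_{j,\cdot}(I,\cdot)$ as functions on $[N]^2\times G$.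
   Context: $[N]=\{1,\dots,N\}$. $W_{ij}(A,B)=e^{-\|Ax_i-Bx_j\|^2/\epsilon}$; $D_{ii}=\sum_{j=1}^N\int_G W_{ij}(I,C)\,d\eta(C)$; $S_{ij}(A,B)=W_{ij}(A,B)/\sqrt{D_{ii}D_{jj}}$. $S^1_{ij}=S_{ij}$ and $S^t_{ij}(A,B)=\sum_{k=1}^N\int_G S^{t-1}_{ik}(A,C)S_{kj}(C,B)\,d\eta(C)$ for $t\ge2$ (the kernel of the $t$-th power of the integral operator $S\{f\}(i,A)=\sum_j\int_G S_{ij}(A,B)f_j(B)\,d\eta(B)$ on $L^2([N]\times G)$). For functions $f,g$ on $[N]\times G$ (written $f(k,C)=f_k(C)$), $(f\circledast g)(k,r,R)=\int_G f_k(C)\,g_r(CR)\,d\eta(C)$; $S^t_{i,\cdot}(I,\cdot)$ denotes $(k,C)\mapsto S^t_{ik}(I,C)$. *)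

From HB Require Import structures.
From mathcomp Require Import all_boot all_order all_algebra.
From mathcomp Require Import complex.
From mathcomp Require Import all_classical all_reals all_analysis.
Import numFieldNormedType.Exports.
Import Order.TTheory GRing.Theory Num.Theory.
Set Implicit Arguments.
Unset Strict Implicit.
Unset Printing Implicit Defensive.
Local Open Scope ring_scope.
Local Open Scope classical_set_scope.

(* pointed structure on C (needed for sigma-algebras generated on M_n(C)) *)
HB.instance Definition _ (R : realType) := isPointed.Build R[i] 0.

Section Defs0.
Variable R : realType.
Variable n : nat.

Definition reim (A : 'M[R[i]]_n) : 'M[R]_n * 'M[R]_n :=
  (map_mx (@complex.Re R) A, map_mx (@complex.Im R) A).

Definition adjmx (A : 'M[R[i]]_n) : 'M[R[i]]_n := (map_mx (@conjc R) A)^T.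

Definition unitary (A : 'M[R[i]]_n) : Prop := adjmx A *m A = 1%:M.

(* The usual topology of M_n(C) = R^{2 n^2} is the one transported by reim;
   its Borel sets are generated by the preimages of open sets. *)
Definition cmx_open : set (set 'M[R[i]]_n) :=
  [set reim @^-1` U | U in [set U | open U]].


End Defs0.

Notation cmx_borel R n := (g_sigma_algebraType (@cmx_open R n)).

Section Defs.
Variable R : realType.
Variable n : nat.
Local Notation cmx_borel := (cmx_borel R n).

(* G is a compact matrix Lie group of unitary matrices
   (= a closed subgroup of U(n), by Cartan's closed subgroup theorem) *)
Definition compact_unitary_group (G : set 'M[R[i]]_n) : Prop :=
  [/\ G 1%:M,
      (forall A B, G A -> G B -> G (A *m B)),
      (forall A, G A -> G (invmx A)),
      (forall A, G A -> @unitary R n A) &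
      closed (@reim R n @` G)].

Definition haar_prob (G : set 'M[R[i]]_n) (eta : probability cmx_borel R) : Prop :=
  eta (G : set cmx_borel) = 1%E /\
  forall (A : 'M[R[i]]_n), G A -> forall B : set cmx_borel, measurable B ->
    eta ((fun C : cmx_borel => (A *m C : 'M[R[i]]_n) : cmx_borel) @^-1` B) = eta B.

Definition sqnorm (v : 'cV[R[i]]_n) : R :=
  \sum_(k < n) ((complex.Re (v k ord0)) ^+ 2 + (complex.Im (v k ord0)) ^+ 2).

Variables (N : nat) (G : set 'M[R[i]]_n) (eta : probability cmx_borel R)
  (eps : R) (x : 'I_N -> 'cV[R[i]]_n).

Definition intG (f : 'M[R[i]]_n -> R) : R := Rintegral eta (G : set cmx_borel) f.

Definition Wk (i j : 'I_N) (A B : 'M[R[i]]_n) : R :=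
  expR (- sqnorm (A *m x i - B *m x j) / eps).

Definition Dk (i : 'I_N) : R := \sum_(j < N) intG (fun C => Wk i j 1%:M C).

Definition Sk (i j : 'I_N) (A B : 'M[R[i]]_n) : R :=
  Wk i j A B / Num.sqrt (Dk i * Dk j).

(* Spow t = S^t for t >= 1 (Spow 0 is set to S as a junk value) *)
Fixpoint Spow (t : nat) (i j : 'I_N) (A B : 'M[R[i]]_n) : R :=
  match t with
  | (u.+1 as t').+1 =>
      \sum_(k < N) intG (fun C => Spow t' i k A C * Sk k j C B)
  | _ => Sk i j A B
  end.

Definition circconv (f g : 'I_N -> 'M[R[i]]_n -> R) (k r : 'I_N)
  (R0 : 'M[R[i]]_n) : R := intG (fun C => f k C * g r (C *m R0)).

End Defs.

From HB Require Import structures.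
From mathcomp Require Import all_boot all_order all_algebra.
From mathcomp Require Import complex.
From mathcomp Require Import all_classical all_reals all_analysis.
Import numFieldNormedType.Exports.
Import Order.TTheory GRing.Theory Num.Theory.
Local Open Scope ring_scope.
Local Open Scope classical_set_scope.

(* Left translation C |-> Q C by Q in G preserves the Haar measure, and since
   Q is unitary it leaves the Gaussian kernel invariant:
   W_ab(Q A, Q B) = W_ab(A, B).  If x_j = Q x_i this gives
   W_jk(I, Q C) = W_ik(I, C), hence D_j = D_i, and by induction on t
   S^t_jk(I, Q C) = S^t_ik(I, C).  Substituting C |-> Q C in the integral
   defining the convolution then yields the identity.  The change of
   variables is proved for arbitrary integrands, so no measurability of S^t
   is ever needed. *)

Lemma continuous_mx_entries (T : topologicalType) (K : numFieldType) m n
    (f : T -> 'M[K]_(m, n)) :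
  (forall i j, continuous (fun x => f x i j)) -> continuous f.
Proof.
move=> fc x; apply/cvg_mx_entourageP => A entA.
apply: filter_forall => i; apply: filter_forall => j.
have /(_ _ A entA) := (cvg_app_entourageP (fun t => f t i j) _ _).1 (fc i j x).
by apply: filterS => y; rewrite /= inE.
Qed.

Lemma mulmx_continuous (K : numFieldType) m n p (L : 'M[K]_(m, n)) :
  continuous (fun M : 'M[K]_(n, p) => L *m M).
Proof.
apply: continuous_mx_entries => i j.
under eq_fun do rewrite mxE.
apply: continuous_big => [|k _]; first exact: add_continuous.
move=> M; exact: (continuousM (@cst_continuous _ _ (L i k) M)
  (@coord_continuous _ _ _ k j M)).
Qed.

Lemma reim_mulmx (R : realType) n (A C : 'M[R[i]]_n) :
  reim (A *m C) = ((reim A).1 *m (reim C).1 - (reim A).2 *m (reim C).2,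
                   (reim A).2 *m (reim C).1 + (reim A).1 *m (reim C).2).
Proof.
congr (_, _); apply/matrixP => a b; rewrite !mxE.
- rewrite (raddf_sum (@complex.Re R : Rcomplex R -> R)) -sumrB.
  by apply: eq_bigr => k _; rewrite !mxE; case: (A a k) => ? ?; case: (C k b).
- rewrite (raddf_sum (@complex.Im R : Rcomplex R -> R)) -big_split.
  apply: eq_bigr => k _; rewrite !mxE.
  by case: (A a k) => ? ?; case: (C k b) => ? ? /=; rewrite addrC.
Qed.

Lemma measurable_mulmxl (R : realType) n (A : 'M[R[i]]_n) :
  measurable_fun setT
    (fun C : cmx_borel R n => (A *m C : 'M[R[i]]_n) : cmx_borel R n).
Proof.
apply: (@measurability _ _ _ _ setT _
  (@cmx_open R n : set (set (cmx_borel R n)))) => //.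
move=> _ [_ [U oU <-] <-]; apply: sub_sigma_algebra.
have lin_cont (L1 L2 : 'M[R]_n) :
    continuous (fun P : 'M[R]_n * 'M[R]_n => L1 *m P.1 + L2 *m P.2).
  move=> P; apply: (@continuousD _ _ _ (fun P => L1 *m P.1)
    (fun P => L2 *m P.2));
  [apply: continuous_comp; [exact: cvg_fst | exact: mulmx_continuous]
  |apply: continuous_comp; [exact: cvg_snd | exact: mulmx_continuous]].
pose phi (P : 'M[R]_n * 'M[R]_n) :=
  ((reim A).1 *m P.1 + - (reim A).2 *m P.2,
   (reim A).2 *m P.1 + (reim A).1 *m P.2).
have phi_cont : continuous phi.
  move=> P; exact: (@cvg_pair _ _ _ (nbhs P) (nbhs (phi P).1) (nbhs (phi P).2)
    _ _ _ _ _ (lin_cont _ _ P) (lin_cont _ _ P)).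
exists (phi @^-1` U); first exact: open_comp.
have phiE C : phi (reim C) = reim (A *m C) by rewrite reim_mulmx /phi mulNmx.
by rewrite setTI; apply/seteqP; split => C /=; rewrite phiE.
Qed.

Import HBNNSimple.

Section nnsfun_comp.
Context d (T : measurableType d) (R : realType) (phi : T -> T)
  (mphi : measurable_fun setT phi) (h : {nnsfun T >-> R}).

Definition nnsfun_comp_fun := h \o phi.

HB.instance Definition _ := isMeasurableFun.Build _ _ T R nnsfun_comp_fun
  (measurableT_comp (measurable_funPT h) mphi).

Lemma nnsfun_comp_finite_range : finite_set (range nnsfun_comp_fun).
Proof. by apply: sub_finite_set (fimfunP h) => _ [x _ <-]; exists (phi x). Qed.

HB.instance Definition _ := FiniteImage.Build T R nnsfun_comp_fun
  nnsfun_comp_finite_range.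
HB.instance Definition _ :=
  isNonNegFun.Build T R nnsfun_comp_fun (fun x => fun_ge0 (phi x)).

Definition nnsfun_comp : {nnsfun T >-> R} := nnsfun_comp_fun.

End nnsfun_comp.
Arguments nnsfun_comp {d T R phi} mphi h.

Section measure_preserving.
Local Open Scope ereal_scope.
Context d (T : measurableType d) (R : realType)
  (mu : {measure set T -> \bar R}).

Lemma sintegral_comp (phi : T -> T) (h : {nnsfun T >-> R}) :
  (forall B, measurable B -> mu (phi @^-1` B) = mu B) ->
  sintegral mu (h \o phi) = sintegral mu h.
Proof.
move=> mu_phi; apply: eq_fsbigr => r _.
have mh : measurable (h @^-1` [set r]) by exact: measurable_funPTI.
by rewrite -(mu_phi _ mh).
Qed.

Variables (phi psi : T -> T).
Hypotheses (phiK : cancel phi psi) (psiK : cancel psi phi).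
Hypotheses (mphi : measurable_fun setT phi) (mpsi : measurable_fun setT psi).
Hypothesis mu_phi : forall B, measurable B -> mu (phi @^-1` B) = mu B.

Lemma measure_preimage_inv B : measurable B -> mu (psi @^-1` B) = mu B.
Proof.
move=> mB; rewrite -mu_phi; last by rewrite -[_ @^-1` _]setTI; exact: mpsi.
by congr (mu _); apply/seteqP; split => x /=; rewrite phiK.
Qed.

Lemma ge0_integral_comp (f : T -> \bar R) : (forall x, 0 <= f x) ->
  \int[mu]_x f (phi x) = \int[mu]_x f x.
Proof.
move=> f0; rewrite !ge0_integralTE //; congr ereal_sup.
apply/seteqP; split => _ [h hf <-].
- exists (nnsfun_comp mpsi h) => [x|] /=.
    by have := hf (psi x); rewrite psiK.
  exact: (sintegral_comp psi h measure_preimage_inv).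
- exists (nnsfun_comp mphi h) => [x|]; first exact: hf.
  exact: (sintegral_comp phi h mu_phi).
Qed.

Lemma integral_comp (D : set T) (f : T -> \bar R) : phi @^-1` D = D ->
  \int[mu]_(x in D) f (phi x) = \int[mu]_(x in D) f x.
Proof.
move=> phiD; rewrite [LHS]integral_mkcond [RHS]integral_mkcond.
have inD x : (phi x \in D) = (x \in D) by rewrite -{2}phiD.
have -> : (fun x => f (phi x)) \_ D = (f \_ D) \o phi.
  by apply/funext => x; rewrite /patch /= inD.
rewrite integralE [RHS]integralE funepos_comp funeneg_comp.
by rewrite !ge0_integral_comp.
Qed.
End measure_preserving.

Lemma sqnormE (R : realType) n (v : 'cV[R[i]]_n) :
  sqnorm v = complex.Re (((map_mx conjc v)^T *m v) 0 0).
Proof.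
rewrite /sqnorm mxE (raddf_sum (@complex.Re R : Rcomplex R -> R)).
apply: eq_bigr => k _; rewrite !mxE.
by case: (v k 0) => a b /=; rewrite !expr2 mulNr opprK.
Qed.

Lemma sqnorm_unitary (R : realType) n (A : 'M[R[i]]_n) (v : 'cV[R[i]]_n) :
  unitary A -> sqnorm (A *m v) = sqnorm v.
Proof.
move=> uA; rewrite !sqnormE map_mxM trmx_mul -!mulmxA (mulmxA _ A).
by move: uA; rewrite /unitary /adjmx => ->; rewrite mul1mx.
Qed.

Lemma unitary_unit (R : realType) n (A : 'M[R[i]]_n) :
  unitary A -> A \in unitmx.
Proof. by move=> /mulmx1_unit []. Qed.

Section translation_invariance.
Variables (R : realType) (n N : nat) (G : set 'M[R[i]]_n)
  (eta : probability (cmx_borel R n) R) (eps : R) (x : 'I_N -> 'cV[R[i]]_n).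
Hypotheses (HG : compact_unitary_group G) (Hh : haar_prob G eta).

Local Notation intG := (intG G eta).
Local Notation Wk := (Wk eps x).
Local Notation Dk := (Dk G eta eps x).
Local Notation Sk := (Sk G eta eps x).
Local Notation Spow := (Spow G eta eps x).

Lemma intG_mulmxl A (f : 'M[R[i]]_n -> R) : G A ->
  intG (fun C => f (A *m C)) = intG f.
Proof.
case: HG => _ GM GV Gu _ GA; have uA : A \in unitmx by exact/unitary_unit/Gu.
congr fine; apply: (@integral_comp _ (cmx_borel R n) R eta
  (fun C => A *m C) (fun C => invmx A *m C)).
- by move=> C; rewrite mulmxA mulVmx // mul1mx.
- by move=> C; rewrite mulmxA mulmxV // mul1mx.
- exact: measurable_mulmxl.
- exact: measurable_mulmxl.
- by move=> B mB; case: Hh => _ /(_ A GA B mB).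
- apply/seteqP; split => C /=; last exact: GM.
  by move=> /(GM _ _ (GV _ GA)); rewrite mulmxA mulVmx // mul1mx.
Qed.

Lemma SpowSS t a b A B :
  Spow t.+2 a b A B =
  \sum_(k < N) intG (fun C => Spow t.+1 a k A C * Sk k b C B).
Proof. by []. Qed.

Lemma Wk_mulmxl a b A B C :
  unitary A -> Wk a b (A *m B) (A *m C) = Wk a b B C.
Proof. by move=> uA; rewrite /Wk -!mulmxA -mulmxBr sqnorm_unitary. Qed.

Lemma Sk_mulmxl a b A B C :
  unitary A -> Sk a b (A *m B) (A *m C) = Sk a b B C.
Proof. by move=> uA; rewrite /Sk Wk_mulmxl. Qed.

Variables (i j : 'I_N) (Q : 'M[R[i]]_n).
Hypotheses (GQ : G Q) (xj : x j = Q *m x i).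

Let uQ : unitary Q. Proof. by case: HG => _ _ _ Gu _; exact: Gu. Qed.

Lemma Wk_translate k C : Wk j k 1%:M (Q *m C) = Wk i k 1%:M C.
Proof. by rewrite -(Wk_mulmxl i k Q 1%:M C uQ) mulmx1 /Wk !mul1mx xj. Qed.

Lemma Dk_translate : Dk j = Dk i.
Proof.
rewrite /Dk; apply: eq_bigr => k _; rewrite -[LHS](intG_mulmxl _ _ GQ).
by apply: congr1; apply/funext => C; rewrite Wk_translate.
Qed.

Lemma Sk_translate k C : Sk j k 1%:M (Q *m C) = Sk i k 1%:M C.
Proof. by rewrite /Sk Wk_translate Dk_translate. Qed.

Lemma Spow_translate t k C : Spow t j k 1%:M (Q *m C) = Spow t i k 1%:M C.
Proof.
elim: t k C => [|[|t] IH] k C; try exact: Sk_translate.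
rewrite !SpowSS; apply: eq_bigr => l _; rewrite -[LHS](intG_mulmxl _ _ GQ).
by apply: congr1; apply/funext => C'; rewrite IH (Sk_mulmxl _ _ _ _ _ uQ).
Qed.

Lemma circconv_Spow_translate t k r R0 :
  let Si := fun k C => Spow t i k 1%:M C in
  let Sj := fun k C => Spow t j k 1%:M C in
  circconv G eta Si Si k r R0 = circconv G eta Sj Sj k r R0.
Proof.
rewrite /circconv -[RHS](intG_mulmxl _ _ GQ).
by apply: congr1; apply/funext => C; rewrite -mulmxA !Spow_translate.
Qed.

End translation_invariance.

Theorem proposition3 (R : realType) (n N : nat) (G : set 'M[R[i]]_n)
  (eta : probability (cmx_borel R n) R) (eps : R) (x : 'I_N -> 'cV[R[i]]_n)
  (t : nat) (i j : 'I_N) (Q : 'M[R[i]]_n) :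
  compact_unitary_group G ->
  haar_prob G eta ->
  0 < eps ->
  (forall a b : 'I_N, a != b -> x a != x b) ->
  (forall (a : 'I_N) (A : 'M[R[i]]_n), G A -> A != 1%:M -> A *m x a != x a) ->
  (0 < t)%N ->
  G Q -> x j = Q *m x i ->
  forall (k r : 'I_N) (R0 : 'M[R[i]]_n), G R0 ->
    let Si := fun (k : 'I_N) (C : 'M[R[i]]_n) => Spow G eta eps x t i k 1%:M C in
    let Sj := fun (k : 'I_N) (C : 'M[R[i]]_n) => Spow G eta eps x t j k 1%:M C in
    circconv G eta Si Si k r R0 = circconv G eta Sj Sj k r R0.
Proof.
move=> HG Hh _ _ _ _ GQ xj k r R0 _.
exact: (@circconv_Spow_translate R n N G eta eps x HG Hh i j Q GQ xj t k r R0).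
Qed.
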